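(* Let $N\ge 1$ and let $\phi: H_0(S_N)\to M_N$ be the quotient morphism of monoids sending $\pi_i\mapsto\pi_i$, where $M_N$ is the quotient of $H_0(S_N)$ by the additional relations $\pi_i\pi_{i+1}\pi_i=\pi_i\pi_{i+1}$ for $1\le i\le N-2$. For every $m\in M_N$, consider the fiber $F_m=\{w\in S_N:\ \phi(\pi_w)=m\}$. Every nonempty fiber $F_m$ contains a unique $[321]$-avoiding permutation, and it is of minimal length among the elements of $F_m$; and $F_m$ contains a unique $[231]$-avoiding permutation, and it is of maximal length among the elements of $F_m$.
   Context: $S_N$ is the symmetric group generated by the simple transpositions $s_1,\dots,s_{N-1}$. Permutations are written in one-line notation $x=[x(1),\dots,x(N)]$ and composed as functions, $(uv)(j)=u(v(j))$, so $xs_i$ is obtained from $x$ by swapping the entries in positions $i,i+1$. The length $\operatorname{len}(x)$ is the length of a reduced (minimal-length) word for $x$ in the $s_i$, i.e. the number of inversions. The $0$-Hecke monoid $H_0(S_N)$ is generated by $\pi_1,\dots,\pi_{N-1}$ with relations $\pi_i^2=\pi_i$, $\pi_i\pi_j=\pi_j\pi_i$ for $|i-j|\ge2$, $\pi_i\pi_{i+1}\pi_i=\pi_{i+1}\pi_i\pi_{i+1}$; its elements are $\pi_w:=\pi_{i_1}\cdots\pi_{i_k}$ for $w\in S_N$, where $w=s_{i_1}\cdots s_{i_k}$ is any reduced word, and $w\mapsto \pi_w$ is a bijection. A permutation $x$ contains a pattern $\sigma\in S_k$ if some subsequence $x(i_1),\dots,x(i_k)$ with $i_1<\dots<i_k$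 is in the same relative order as $\sigma(1),\dots,\sigma(k)$; otherwise $x$ avoids $\sigma$. The monoid $M_N$ is isomorphic to the monoid $\operatorname{NDPF}_N$ of order-preserving, regressive ($f(x)\le x$) maps of $\{1,\dots,N\}$, with $\pi_i$ the map sending $i+1\mapsto i$ and fixing all other points. *)

From mathcomp Require Import all_boot all_order all_fingroup.
From Stdlib Require Import Relations.
Set Implicit Arguments. Unset Strict Implicit. Unset Printing Implicit Defensive.

(* Positions and values are 0-indexed: 'I_N = {0,...,N-1}; the generator
   s_i of the paper (1 <= i <= N-1) is [sgen N (i-1)], swapping positions
   i-1 and i (0-indexed). *)

Definition sgen (N : nat) (k : nat) : 'S_N :=
  match N return 'S_N with
  | 0 => 1%g
  | n.+1 => tperm (inord k : 'I_n.+1) (inord k.+1)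
  end.

(* A word in the generators: letter k stands for s_{k+1}; valid iff k.+1 < N. *)
Definition valid_word (N : nat) (r : seq nat) : Prop := all (fun k => k.+1 < N) r.

(* Value of a word s_{i1} ... s_{ik} as a composition of functions
   (u v)(j) = u(v(j)).  In mathcomp, (p * q) x = q (p x). *)
Fixpoint perm_of_word (N : nat) (r : seq nat) : 'S_N :=
  match r with
  | [::] => 1%g
  | k :: r' => (perm_of_word N r' * sgen N k)%g
  end.

Definition len (N : nat) (x : 'S_N) : nat :=
  #|[set p : 'I_N * 'I_N | (p.1 < p.2) && (x p.2 < x p.1)]|.

Definition reduced_word (N : nat) (r : seq nat) (x : 'S_N) : Prop :=
  valid_word N r /\ perm_of_word N r = x /\
  forall r', valid_word N r' -> perm_of_word N r' = x -> size r <= size r'.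

(* Pattern containment: sigma given by the relative order of its values. *)
Definition contains (N k : nat) (x : 'S_N) (sigma : 'I_k -> nat) : Prop :=
  exists f : 'I_k -> 'I_N,
    (forall a b : 'I_k, a < b -> f a < f b) /\
    (forall a b : 'I_k, (x (f a) < x (f b)) = (sigma a < sigma b)).

Definition avoids (N k : nat) (x : 'S_N) (sigma : 'I_k -> nat) : Prop :=
  ~ contains x sigma.

Definition pat321 : 'I_3 -> nat := fun a => nth 0 [:: 3; 2; 1] a.
Definition pat231 : 'I_3 -> nat := fun a => nth 0 [:: 2; 3; 1] a.

Inductive M_rel (N : nat) : seq nat -> seq nat -> Prop :=
  | Mr_idem i : i.+1 < N -> M_rel N [:: i; i] [:: i]
  | Mr_comm i j : i.+1 < N -> j.+1 < N -> (i.+1 < j \/ j.+1 < i) ->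
      M_rel N [:: i; j] [:: j; i]
  | Mr_braid i : i.+2 < N -> M_rel N [:: i; i.+1; i] [:: i.+1; i; i.+1]
  | Mr_extra i : i.+2 < N -> M_rel N [:: i; i.+1; i] [:: i; i.+1].

Definition M_step (N : nat) (u v : seq nat) : Prop :=
  exists a b l r, M_rel N l r /\ u = a ++ l ++ b /\ v = a ++ r ++ b.

Definition M_cong (N : nat) : relation (seq nat) :=
  clos_refl_sym_trans (seq nat) (M_step N).

(* phi(pi_x) = phi(pi_y) in M_N: reduced words of x and y are equal in M_N. *)
Definition same_image (N : nat) (x y : 'S_N) : Prop :=
  exists r s, reduced_word r x /\ reduced_word s y /\ M_cong N r s.

From mathcomp Require Import all_boot all_order all_fingroup.
From mathcomp Require Import zify.
From Stdlib Require Import Relations.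
Set Implicit Arguments. Unset Strict Implicit. Unset Printing Implicit Defensive.

(* M_N acts on {0, ..., N-1} by order-preserving regressive maps, the letter k
   acting as [k+1 |-> k]; two words are congruent exactly when they act by the
   same map, because every word is congruent to a normal word read off from
   its map.  For a reduced word of x every letter is an ascent of the
   permutation built so far, and one checks that the map is then the
   suffix-minimum function j |-> min_{l >= j} x(l).  So the fibres of phi are
   the classes of permutations with equal suffix minima.
   In such a class, exchanging the entries 3 and 2 of an occurrence of [321]
   keeps the suffix minima and decreases the length; and two [321]-avoiders
   of the class coincide, since at the first position where they differ the
   larger one starts an occurrence of [321].  Hence the class has a unique
   [321]-avoider and it is of minimal length.  Dually, exchanging the entries
   2 and 3 of an occurrence of [231] increases the length, and the last
   position where two [231]-avoiders differ exhibits a [231]. *)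

(* Splits innermost comparisons first, so that the enclosing [if]s reduce. *)
Ltac case_nat_eqs :=
  repeat match goal with
  | |- context [?a == ?b] =>
      lazymatch a with context [if _ then _ else _] => fail | _ => idtac end;
      lazymatch b with context [if _ then _ else _] => fail | _ => idtac end;
      case: (a =P b) => ?
  end.

Section Congruence.

Variable N : nat.

Lemma M_cong_trans v u w : M_cong N u v -> M_cong N v w -> M_cong N u w.
Proof. exact: rst_trans. Qed.

Lemma M_cong_sym u v : M_cong N u v -> M_cong N v u.
Proof. exact: rst_sym. Qed.

Lemma M_cong_ctx p q u v :
  M_cong N u v -> M_cong N (p ++ u ++ q) (p ++ v ++ q).
Proof.
elim=> {u v} [u v [a [b [l [r [H [-> ->]]]]]] | u | u v _ IH | u v w _ IH1 _ IH2].
- by apply: rst_step; exists (p ++ a), (b ++ q), l, r; rewrite !catA.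
- exact: rst_refl.
- exact: rst_sym.
- exact: rst_trans IH1 IH2.
Qed.

Lemma M_cong_catl p u v : M_cong N u v -> M_cong N (p ++ u) (p ++ v).
Proof. by move=> /(M_cong_ctx p [::]); rewrite !cats0. Qed.

Lemma M_cong_catr q u v : M_cong N u v -> M_cong N (u ++ q) (v ++ q).
Proof. exact: M_cong_ctx [::] q u v. Qed.

Lemma M_cong_cons b u v : M_cong N u v -> M_cong N (b :: u) (b :: v).
Proof. exact: M_cong_catl [:: b] u v. Qed.

Lemma M_cong_rel p q l r : M_rel N l r -> M_cong N (p ++ l ++ q) (p ++ r ++ q).
Proof. by move=> H; apply: rst_step; exists p, q, l, r. Qed.

Lemma M_cong_commute k B : k.+1 < N -> all (fun x => x.+1 < N) B ->
  all (fun x => (x.+1 < k) || (k.+1 < x)) B -> M_cong N (B ++ [:: k]) (k :: B).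
Proof.
move=> hk; elim: B => [|b B IH] /=; first by move=> _ _; apply: rst_refl.
move=> /andP[hb hB] /andP[hbk hBk].
apply: M_cong_trans (M_cong_cons b (IH hB hBk)) _.
have hbk' : b.+1 < k \/ k.+1 < b by apply/orP.
exact: (M_cong_rel [::] B (Mr_comm hb hk hbk')).
Qed.

End Congruence.

Definition ndpf_gen (k x : nat) : nat := if x == k.+1 then k else x.

Fixpoint ndpf_of_word (r : seq nat) (x : nat) : nat :=
  if r is k :: r' then ndpf_gen k (ndpf_of_word r' x) else x.

Lemma ndpf_of_word_cat r s x :
  ndpf_of_word (r ++ s) x = ndpf_of_word r (ndpf_of_word s x).
Proof. by elim: r => //= k r ->. Qed.

Lemma ndpf_of_word_le r x : ndpf_of_word r x <= x.
Proof. by elim: r => //= k r IH; rewrite /ndpf_gen; case: eqP; lia. Qed.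

Lemma ndpf_of_word_homo r : {homo ndpf_of_word r : x y / x <= y}.
Proof.
elim: r => //= k r IH x y /IH; rewrite /ndpf_gen.
by case: eqP => [e1|n1]; case: eqP => [e2|n2]; lia.
Qed.

Lemma M_rel_ndpf N l r : M_rel N l r -> ndpf_of_word l =1 ndpf_of_word r.
Proof.
by case=> [i _|i j _ _ hij|i _|i _] x /=; rewrite /ndpf_gen; case_nat_eqs; lia.
Qed.

Lemma M_cong_ndpf N u v : M_cong N u v -> ndpf_of_word u =1 ndpf_of_word v.
Proof.
elim=> {u v} [u v [a [b [l [r [H [-> ->]]]]]] | u | u v _ IH | u v w _ IH1 _ IH2] x.
- by rewrite !ndpf_of_word_cat (M_rel_ndpf H).
- by [].
- by rewrite IH.
- by rewrite IH1 IH2.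
Qed.

Definition chain (a c : nat) : seq nat := iota a (c - a).

Lemma chain_split a i c : a <= i < c -> chain a c = chain a i ++ i :: chain i.+1 c.
Proof.
move=> /andP[h1 h2]; rewrite /chain.
have -> : c - a = i - a + (c - i.+1).+1 by lia.
by rewrite iotaD subnKC.
Qed.

Lemma chainnn a : chain a a = [::].
Proof. by rewrite /chain subnn. Qed.

Lemma chain_rcons a c : a <= c -> chain a c.+1 = rcons (chain a c) c.
Proof.
by move=> h; rewrite (@chain_split a c c.+1) ?(chainnn c.+1) ?cats1 ?h ?leqnn.
Qed.

Lemma mem_chain a c x : (x \in chain a c) = (a <= x < c).
Proof. by rewrite mem_iota; case: (leqP a x) => //= hx; apply/idP/idP; lia. Qed.

Lemma all_chain (P : pred nat) a c :
  (forall x, a <= x < c -> P x) -> all P (chain a c).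
Proof. by move=> H; apply/allP => x; rewrite mem_chain; apply: H. Qed.

Section ChainAbsorption.

Variable N : nat.

Lemma chain_absorb_r a i c : a <= i < c -> c < N ->
  M_cong N (rcons (chain a c) i) (chain a c).
Proof.
move=> hi hc; rewrite -cats1 (chain_split hi); case/andP: hi => hai hic.
move: (hic); rewrite leq_eqVlt => /orP[/eqP <- | hic'].
  rewrite (chainnn i.+1) -catA /=.
  by have := M_cong_rel (chain a i) [::] (@Mr_idem N i ltac:(lia)); rewrite !cats0.
rewrite (@chain_split i.+1 i.+1 c) ?leqnn // (chainnn i.+1) -catA /=.
have hcomm : M_cong N (chain i.+2 c ++ [:: i]) (i :: chain i.+2 c).
  by apply: M_cong_commute; [lia | apply: all_chain; lia | apply: all_chain; lia].
apply: M_cong_trans (M_cong_catl (chain a i) (M_cong_cons i (M_cong_cons i.+1 hcomm))) _.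
exact: (M_cong_rel (chain a i) (chain i.+2 c) (@Mr_extra N i ltac:(lia))).
Qed.

Lemma chain_absorb_l a i c : a <= i < c -> c < N ->
  M_cong N (i :: chain a c) (chain a c).
Proof.
move=> hi hc; rewrite (chain_split hi); case/andP: hi => hai hic.
move: (hai); rewrite leq_eqVlt => /orP[/eqP <- | hai'].
  rewrite (chainnn a) /=.
  exact: (M_cong_rel [::] (chain a.+1 c) (@Mr_idem N a ltac:(lia))).
case: i hai hic hai' => [|j] hai hic hai'; first lia.
rewrite (@chain_split a j j.+1) ?leqnn; last lia.
rewrite (chainnn j.+1) -catA /=.
have hcomm : M_cong N (chain a j ++ [:: j.+1]) (j.+1 :: chain a j).
  by apply: M_cong_commute; [lia | apply: all_chain; lia | apply: all_chain; lia].
rewrite -cat_cons.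
apply: M_cong_trans (M_cong_catr (j :: j.+1 :: chain j.+2 c) (M_cong_sym hcomm)) _.
rewrite -catA /=.
apply: M_cong_trans (M_cong_sym (M_cong_rel (chain a j) (chain j.+2 c) (@Mr_braid N j _))) _.
  lia.
exact: (M_cong_rel (chain a j) (chain j.+2 c) (@Mr_extra N j ltac:(lia))).
Qed.

Lemma chain_absorb_seq_r a c B : c < N -> all (fun x => a <= x < c) B ->
  M_cong N (chain a c ++ B) (chain a c).
Proof.
move=> hc; elim: B => [|b B IH] /=; first by rewrite cats0 => _; apply: rst_refl.
move=> /andP[hb hB]; rewrite -cat1s catA cats1.
exact: M_cong_trans (M_cong_catr B (chain_absorb_r hb hc)) (IH hB).
Qed.

Lemma chain_absorb_seq_l a c B : c < N -> all (fun x => a <= x < c) B ->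
  M_cong N (B ++ chain a c) (chain a c).
Proof.
move=> hc; elim: B => [|b B IH] /=; first by move=> _; apply: rst_refl.
move=> /andP[hb hB].
exact: M_cong_trans (M_cong_cons b (IH hB)) (chain_absorb_l hb hc).
Qed.

Lemma chain_absorb_pair a b c : a <= b -> c.+1 < N ->
  M_cong N (chain b c.+1 ++ chain a c.+1) (chain a c.+1 ++ chain a c).
Proof.
move=> hab hc; apply: M_cong_trans (chain_absorb_seq_l _ _) _ => //.
  by apply: all_chain; lia.
by apply/M_cong_sym/chain_absorb_seq_r => //; apply: all_chain; lia.
Qed.

End ChainAbsorption.

Definition normal_word (N : nat) (f : nat -> nat) : seq nat :=
  flatten [seq chain (f j) j | j <- rev (iota 0 N)].

Lemma eq_normal_word N f g :
  (forall j, j < N -> f j = g j) -> normal_word N f = normal_word N g.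
Proof.
move=> fg; congr flatten; apply/eq_in_map => j.
by rewrite mem_rev mem_iota => /andP[_ hj]; rewrite fg.
Qed.

Lemma normal_word_id N : normal_word N id = [::].
Proof. by rewrite /normal_word; elim: (rev _) => //= j s ->; rewrite chainnn. Qed.

Lemma normal_word_rcons N k f : k.+1 < N -> (forall x, f x <= x) ->
  {homo f : x y / x <= y} ->
  M_cong N (rcons (normal_word N f) k) (normal_word N (f \o ndpf_gen k)).
Proof.
move=> hk f_le f_homo.
have [m ->] : exists m, N = k.+2 + m by exists (N - k.+2); lia.
rewrite /normal_word.
have -> : iota 0 (k.+2 + m) = iota 0 k ++ [:: k; k.+1] ++ iota k.+2 m.
  by rewrite iotaD -addn2 iotaD -catA add0n.
rewrite !rev_cat !map_cat !flatten_cat /= /ndpf_gen eqxx.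
case: eqP => [|_]; first lia.
(* Only the chains ending at k and k+1 change: the new letter k commutes past
   the lower chains Y, extends the chain ending at k, and that chain is then
   absorbed by the one ending at k+1. *)
set Y := flatten [seq chain (f j) j | j <- rev (iota 0 k)].
have fix_out s : {in s, forall j, j != k.+1} ->
    [seq chain (f (if j == k.+1 then k else j)) j | j <- s] = [seq chain (f j) j | j <- s].
  by move=> hs; apply/eq_in_map => j /hs /negbTE ->.
rewrite !fix_out; try by move=> j; rewrite mem_rev mem_iota => /andP[? ?]; apply/eqP; lia.
rewrite -/Y cats0 -cats1 -!catA.
have Y_small : all (fun x => x.+1 < k) Y.
  apply/allP => x /flattenP[_ /mapP[j + ->]].
  by rewrite mem_rev mem_iota mem_chain => /andP[_ ?] /andP[_ ?]; lia.
have hcomm : M_cong (k.+2 + m) (Y ++ [:: k]) (k :: Y).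
  apply: M_cong_commute; first lia.
    by apply/allP => x /(allP Y_small) /=; lia.
  by apply/allP => x /(allP Y_small) /= ->.
apply: M_cong_catl; apply: M_cong_trans (M_cong_catl _ (M_cong_catl _ hcomm)) _.
have -> : chain (f k) k ++ k :: Y = chain (f k) k.+1 ++ Y.
  by rewrite chain_rcons // cat_rcons.
rewrite !catA; apply/M_cong_catr/chain_absorb_pair; [exact: f_homo | lia].
Qed.

Lemma M_cong_normal_word N r :
  valid_word N r -> M_cong N r (normal_word N (ndpf_of_word r)).
Proof.
elim/last_ind: r => [_|r k IH].
  by rewrite (@eq_normal_word _ _ id) ?normal_word_id //; exact: rst_refl.
rewrite /valid_word all_rcons => /andP[hk hr].
rewrite -cats1; apply: M_cong_trans (M_cong_catr [:: k] (IH hr)) _.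
have -> : normal_word N (ndpf_of_word (r ++ [:: k])) =
          normal_word N (ndpf_of_word r \o ndpf_gen k).
  by apply: eq_normal_word => j _; rewrite ndpf_of_word_cat.
rewrite cats1; exact: normal_word_rcons (@ndpf_of_word_le r) (@ndpf_of_word_homo r).
Qed.

Lemma sgenE N k (y : 'I_N) : k.+1 < N ->
  (sgen N k y : nat) = if y == k :> nat then k.+1 else if y == k.+1 :> nat then k else y.
Proof.
case: N y => [|n] y hk; first by case: y.
rewrite /sgen; case: tpermP => [->|->|h1 h2]; rewrite ?inordK ?eqxx //; try lia.
  by case: eqP => //; lia.
case: eqP => [e|_]; first by case: h1; apply: val_inj; rewrite /= inordK -?e.
by case: eqP => [e|_] //; case: h2; apply: val_inj; rewrite /= inordK -?e.
Qed.

Lemma ltn_sgen N k (y z : 'I_N) : k.+1 < N ->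
  ~~ ((y == k :> nat) && (z == k.+1 :> nat)) ->
  ~~ ((y == k.+1 :> nat) && (z == k :> nat)) ->
  (sgen N k y < sgen N k z) = (y < z).
Proof.
move=> hk; rewrite !sgenE //.
case: (nat_of_ord y =P k) => ?; case: (nat_of_ord y =P k.+1) => ?;
  case: (nat_of_ord z =P k) => ?; case: (nat_of_ord z =P k.+1) => ? //= _ _;
  apply/idP/idP; lia.
Qed.

Definition inversions N (x : 'S_N) : {set 'I_N * 'I_N} :=
  [set p : 'I_N * 'I_N | (p.1 < p.2) && (x p.2 < x p.1)].

Lemma lenE N (x : 'S_N) : len x = #|inversions x|.
Proof. by []. Qed.

Section Length.

Variable n : nat.
Local Notation N := n.+1.

Definition pos (x : 'S_N) (k : nat) : 'I_N := (x^-1)%g (inord k).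

Lemma perm_pos (x : 'S_N) k : k < N -> x (pos x k) = k :> nat.
Proof. by move=> h; rewrite /pos permKV inordK. Qed.

Lemma pos_perm (x : 'S_N) k a : k < N -> x a = k :> nat -> a = pos x k.
Proof. by move=> h e; apply: (@perm_inj _ x); apply: ord_inj; rewrite perm_pos. Qed.

Lemma pos_neq_succ (x : 'S_N) k : k.+1 < N -> pos x k != pos x k.+1.
Proof.
move=> hk; apply/eqP => /(congr1 (fun a => x a : nat)).
by rewrite !perm_pos //; lia.
Qed.

Lemma len_mul_sgen_le (x : 'S_N) k : k.+1 < N -> len (x * sgen N k)%g <= (len x).+1.
Proof.
move=> hk; rewrite !lenE.
set A := pos x k; set B := pos x k.+1.
set Q := if A < B then (A, B) else (B, A).
have sub : inversions (x * sgen N k)%g \subset Q |: inversions x.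
  apply/subsetP => [[a b]]; rewrite !inE /= !permM => /andP[hab hs].
  case: (boolP ((x a == k :> nat) && (x b == k.+1 :> nat))) => [/andP[/eqP ea /eqP eb]|h1].
    have hA : a = A by apply: pos_perm => //; lia.
    have hB : b = B by apply: pos_perm.
    by rewrite /Q -hA -hB hab eqxx.
  case: (boolP ((x b == k :> nat) && (x a == k.+1 :> nat))) => [/andP[/eqP eb /eqP ea]|h2].
    by move: hs; rewrite !sgenE // eb ea; case_nat_eqs; lia.
  by rewrite hab -(ltn_sgen hk h2) ?hs ?orbT // andbC.
apply: leq_trans (subset_leq_card sub) _.
by rewrite cardsU1; case: (_ \notin _).
Qed.

Lemma len_mul_sgen_lt (x : 'S_N) k : k.+1 < N -> pos x k.+1 < pos x k ->
  len (x * sgen N k)%g < len x.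
Proof.
move=> hk hBA; rewrite !lenE.
set A := pos x k; set B := pos x k.+1.
have xA : x A = k :> nat by apply: perm_pos; lia.
have xB : x B = k.+1 :> nat by apply: perm_pos.
have inBA : (B, A) \in inversions x by rewrite !inE /= hBA xA xB /=.
have sub : inversions (x * sgen N k)%g \subset inversions x :\ (B, A).
  apply/subsetP => [[a b]]; rewrite !inE /= !permM => /andP[hab hs].
  case: (boolP ((x b == k :> nat) && (x a == k.+1 :> nat))) => [/andP[/eqP eb /eqP ea]|h2].
    by move: hs; rewrite !sgenE // eb ea; case_nat_eqs; lia.
  case: (boolP ((x a == k :> nat) && (x b == k.+1 :> nat))) => [/andP[/eqP ea /eqP eb]|h1].
    have hA : a = A by apply: pos_perm => //; lia.
    have hB : b = B by apply: pos_perm.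
    by exfalso; move: hab hBA; rewrite hA hB /A /B; lia.
  rewrite hab -(ltn_sgen hk h2) ?hs ?andbT; last by rewrite andbC.
  apply/negP => /eqP [ea eb]; move: h2; rewrite ea eb xA xB eqxx.
  by case: eqP => //; lia.
have := subset_leq_card sub.
by rewrite (cardsD1 (B, A) (inversions x)) inBA add1n ltnS.
Qed.

Lemma pos_increasing_id (x : 'S_N) :
  (forall k, k.+1 < N -> pos x k < pos x k.+1) -> x = 1%g.
Proof.
move=> H; set f := fun i => pos x i : nat.
have lo i : i < N -> i <= f i.
  elim: i => [|i IH] hi //; have := H i hi; have := IH (ltnW hi); rewrite /f; lia.
have up d i : i + d = n -> f i <= i.
  elim: d i => [|d IH] i hi; first by rewrite /f; have := ltn_ord (pos x i); lia.
  by have := IH i.+1; have := H i; rewrite /f; lia.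
apply/permP => a; rewrite perm1; apply: ord_inj.
have e : pos x (x a) = a by rewrite /pos inord_val permK.
have := lo (x a) (ltn_ord _); have := up (n - x a) (x a).
by rewrite /f e; have := ltn_ord (x a); lia.
Qed.

Lemma exists_descent (x : 'S_N) : x != 1%g ->
  exists2 k, k.+1 < N & len (x * sgen N k)%g < len x.
Proof.
move=> hx; have [/forallP H|] := boolP [forall k : 'I_n, pos x k < pos x k.+1].
  by case/eqP: hx; apply: pos_increasing_id => k hk; exact: (H (Ordinal (hk : k < n))).
rewrite negb_forall => /existsP[k hk].
have hk1 : k.+1 < N by rewrite ltnS.
exists k => //; apply: len_mul_sgen_lt => //.
by rewrite ltn_neqAle eq_sym pos_neq_succ // leqNgt.
Qed.

Lemma short_word_exists (x : 'S_N) :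
  exists r, [/\ valid_word N r, perm_of_word N r = x & size r <= len x].
Proof.
elim: {x}(len x) {-2}x (leqnn (len x)) => [|m IH] x hx.
  case: (eqVneq x 1%g) => [->|/exists_descent[k _]]; first by exists [::].
  lia.
case: (eqVneq x 1%g) => [->|/exists_descent[k hk h]]; first by exists [::].
have [r [hv hp hs]] := IH (x * sgen N k)%g ltac:(lia).
exists (k :: r); split; first by rewrite /valid_word /= hk.
  by rewrite /= hp -mulgA /sgen tperm2 mulg1.
by rewrite /=; lia.
Qed.

Lemma len_perm_of_word r : valid_word N r -> len (perm_of_word N r) <= size r.
Proof.
elim: r => /= [_|k r IH].
  rewrite leqn0 lenE cards_eq0; apply/eqP/setP => p; rewrite !inE !perm1.
  by case: (ltnP p.1 p.2) => //= h; rewrite ltnNge (ltnW h).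
rewrite /valid_word /= => /andP[hk hr].
by apply: leq_trans (len_mul_sgen_le _ hk) _; rewrite ltnS IH.
Qed.

Lemma size_reduced_word r (x : 'S_N) : reduced_word r x -> size r = len x.
Proof.
move=> [hv [hp hmin]]; have [r0 [hv0 hp0 hs0]] := short_word_exists x.
by have := hmin r0 hv0 hp0; have := len_perm_of_word hv; rewrite hp; lia.
Qed.

Lemma reduced_word_exists (x : 'S_N) : exists r, reduced_word r x.
Proof.
have [r [hv hp hs]] := short_word_exists x.
exists r; split => //; split => // r' hv' hp'.
by have := len_perm_of_word hv'; rewrite hp'; lia.
Qed.

End Length.

Definition suffix_min N (x : 'S_N) (j : nat) : nat :=
  \big[minn/N]_(l : 'I_N | j <= l) x l.

Section SuffixMin.

Variable N : nat.
Implicit Types (x : 'S_N) (l : 'I_N).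

Lemma suffix_min_le x j l : j <= l -> suffix_min x j <= x l.
Proof. exact: (Order.TotalTheory.bigmin_le_cond (T := nat)). Qed.

Lemma suffix_min_out x j : N <= j -> suffix_min x j = N.
Proof.
move=> hj; rewrite /suffix_min big_pred0 // => l.
by apply/negbTE; rewrite -ltnNge (leq_trans (ltn_ord l)).
Qed.

Lemma suffix_min_attained x j : j < N ->
  exists2 l : 'I_N, j <= l & x l = suffix_min x j :> nat.
Proof.
move=> hj; rewrite /suffix_min (Order.TotalTheory.bigmin_eq_arg (T := nat) N (Ordinal hj)) //.
  by case: Order.TotalTheory.arg_minP => // l; exists l.
by move=> l _; apply: ltnW.
Qed.

Lemma suffix_minE x j v : j < N -> (exists2 l : 'I_N, j <= l & x l = v :> nat) ->
  (forall l, j <= l -> v <= x l) -> suffix_min x j = v.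
Proof.
move=> hj [l hl <-] H; have [l0 hl0 e0] := suffix_min_attained x hj.
by apply/eqP; rewrite eqn_leq suffix_min_le // -e0 H.
Qed.

End SuffixMin.

Lemma suffix_min_mul_sgen n (y : 'S_n.+1) k j : k.+1 < n.+1 ->
  pos y k < pos y k.+1 -> j < n.+1 ->
  suffix_min (y * sgen n.+1 k)%g j = ndpf_gen k (suffix_min y j).
Proof.
move=> hk hp hj; have [l hl e] := suffix_min_attained y hj.
set v := suffix_min y j in e *.
have lb (l' : 'I_n.+1) : j <= l' -> v <= y l' by apply: suffix_min_le.
rewrite /ndpf_gen; case: (eqVneq v k.+1) => [ev|nv].
  apply: suffix_minE => //.
    by exists l; rewrite // permM sgenE // e ev eqxx; case: eqP => //; lia.
  by move=> l' hl'; have := lb l' hl'; rewrite permM sgenE //; case_nat_eqs; lia.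
have [ev|nv'] := eqVneq v k.
  have el : l = pos y k by apply: pos_perm; lia.
  apply: suffix_minE => //.
    exists (pos y k.+1); first by move: hl hp; rewrite el; lia.
    by rewrite permM sgenE // perm_pos // eqxx; case: eqP => //; lia.
  by move=> l' hl'; have := lb l' hl'; rewrite permM sgenE // ev; case_nat_eqs; lia.
apply: suffix_minE => //.
  by exists l; rewrite // permM sgenE // e; case_nat_eqs; lia.
move=> l' hl'; have := lb l' hl'; rewrite permM sgenE //; move: nv nv'.
by case_nat_eqs; lia.
Qed.

Lemma ndpf_of_reduced_word n r (x : 'S_n.+1) : reduced_word r x ->
  forall j, j < n.+1 -> ndpf_of_word r j = suffix_min x j.
Proof.
move=> hr; have := size_reduced_word hr; case: hr => hv [<- _].
elim: r hv => [_ _ j hj|k r IH].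
  apply/esym/suffix_minE => // [|l]; last by rewrite perm1.
  by exists (inord j); rewrite ?perm1 inordK.
move=> /andP[hk hr]; rewrite [size _]/= => hs j hj.
change (perm_of_word n.+1 (k :: r)) with (perm_of_word n.+1 r * sgen n.+1 k)%g in hs |- *.
set y := perm_of_word n.+1 r in hs *.
have hlen : len y = size r.
  by have := len_mul_sgen_le y hk; have := len_perm_of_word hr; rewrite -/y; lia.
have hp : pos y k < pos y k.+1.
  rewrite ltn_neqAle pos_neq_succ // leqNgt; apply/negP => /(len_mul_sgen_lt hk).
  by rewrite -hs hlen; lia.
by rewrite /= (IH hr (esym hlen)) // suffix_min_mul_sgen.
Qed.

Lemma same_imageE n (v w : 'S_n.+1) : same_image v w <-> suffix_min v =1 suffix_min w.
Proof.
have [r hr] := reduced_word_exists v; have [s hs] := reduced_word_exists w.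
split=> [[r' [s' [hr' [hs' hrs]]]] j|vw].
  have [hj|hj] := ltnP j n.+1; last by rewrite !suffix_min_out.
  by rewrite -(ndpf_of_reduced_word hr') // -(ndpf_of_reduced_word hs') ?(M_cong_ndpf hrs).
exists r, s; do 2!split=> //.
have e : normal_word n.+1 (ndpf_of_word r) = normal_word n.+1 (ndpf_of_word s).
  apply: eq_normal_word => j hj.
  by rewrite (ndpf_of_reduced_word hr) ?(ndpf_of_reduced_word hs) ?vw.
case: hr hs => [hvr _] [hvs _].
apply: M_cong_trans (M_cong_normal_word hvr) _.
by rewrite e; apply/M_cong_sym/M_cong_normal_word.
Qed.

Ltac case_ord3 a := case: a => [[|[|[|?]]] ?] //=.

Lemma ord_neq n (a b : 'I_n) : a <> b -> a <> b :> nat.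
Proof. by move=> + /val_inj. Qed.

Ltac case_tperm := case: tpermP => [->|->|/ord_neq ? /ord_neq ?].

Section Patterns.

Variable N : nat.
Implicit Types (u v x : 'S_N) (i j k l : 'I_N).

Lemma contains321P x : reflect (contains x pat321)
  [exists i : 'I_N, exists j : 'I_N, exists k : 'I_N, [&& i < j, j < k, x k < x j & x j < x i]].
Proof.
apply: (iffP idP) => [|[f [f_incr f_pat]]].
  move=> /existsP[i /existsP[j /existsP[k /and4P[hij hjk hkj hji]]]].
  exists (fun a : 'I_3 => nth i [:: i; j; k] a).
  by split=> a b; case_ord3 a; case_ord3 b; rewrite /pat321 /=; try apply/negbTE; lia.
apply/existsP; exists (f (inord 0)); apply/existsP; exists (f (inord 1)).
apply/existsP; exists (f (inord 2)).
by rewrite !f_incr ?f_pat /pat321 ?inordK.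
Qed.

Lemma contains231P x : reflect (contains x pat231)
  [exists i : 'I_N, exists j : 'I_N, exists k : 'I_N, [&& i < j, j < k, x k < x i & x i < x j]].
Proof.
apply: (iffP idP) => [|[f [f_incr f_pat]]].
  move=> /existsP[i /existsP[j /existsP[k /and4P[hij hjk hki hij']]]].
  exists (fun a : 'I_3 => nth i [:: i; j; k] a).
  by split=> a b; case_ord3 a; case_ord3 b; rewrite /pat231 /=; try apply/negbTE; lia.
apply/existsP; exists (f (inord 0)); apply/existsP; exists (f (inord 1)).
apply/existsP; exists (f (inord 2)).
by rewrite !f_incr ?f_pat /pat231 ?inordK.
Qed.

Lemma suffix_min_swap v i j k : i < j -> j < k -> v k < v i -> v k < v j ->
  suffix_min (tperm i j * v)%g =1 suffix_min v.
Proof.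
move=> hij hjk hki hkj p.
have [hp|hp] := ltnP p N; last by rewrite !suffix_min_out.
have [l hl e] := suffix_min_attained v hp.
set m := suffix_min v p in e *.
have lb l' : p <= l' -> m <= v l' by apply: suffix_min_le.
apply: suffix_minE => //.
  have [eli|nli] := eqVneq l i.
    by exists j; rewrite ?permM ?tpermR -?e ?eli //; move: hl; rewrite eli; lia.
  have [elj|nlj] := eqVneq l j.
    by have := lb k; move: e hl; rewrite elj; lia.
  by exists l; rewrite // permM tpermD // eq_sym.
move=> l' hl'; rewrite permM; case: tpermP => [ei|ej|_ _]; last exact: lb.
  by apply: lb; move: hl'; rewrite ei; lia.
have [hpi|hpi] := leqP p i; first exact: lb.
by have := lb k; move: hl'; rewrite ej; lia.
Qed.

Lemma len_swap_lt v i j : i < j -> v j < v i -> len (tperm i j * v)%g < len v.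
Proof.
move=> hij hv; rewrite !lenE.
set t := tperm i j.
(* Pairs with an end strictly between i and j are kept, the others are moved
   by t: this injects the inversions of t v into those of v other than (i, j). *)
pose mid (p : 'I_N) := (i < p) && (p < j).
have midt p : mid (t p) = mid p by rewrite /mid /t; case: tpermP => [->|->|]; lia.
pose phi (q : 'I_N * 'I_N) := if mid q.1 || mid q.2 then q else (t q.1, t q.2).
have phiK : involutive phi.
  move=> [a b]; rewrite /phi /=; case: (boolP (mid a || mid b)) => h /=; rewrite ?h //.
  by rewrite !midt (negbTE h) !tpermK.
have inij : (i, j) \in inversions v by rewrite !inE /= hij hv.
have sub : phi @: inversions (t * v)%g \subset inversions v :\ (i, j).
  apply/subsetP => q /imsetP[[a b]]; rewrite !inE /= !permM => /andP[hab hs] ->.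
  rewrite /phi /=; case: ifP => hm /=.
    apply/andP; split.
      by apply/negP => /eqP [ea eb]; move: hm; rewrite /mid ea eb; lia.
    by move: hab hm hs; rewrite /mid /t; do 2!case_tperm; lia.
  rewrite /= hs andbT; apply/andP; split.
    apply/negP => /eqP [ea eb].
    have e1 : a = j by rewrite -(tpermK i j a) -/t ea tpermL.
    have e2 : b = i by rewrite -(tpermK i j b) -/t eb tpermR.
    by move: hab hij; rewrite e1 e2; lia.
  by move: hab hm hs; rewrite /mid /t; do 2!case_tperm; lia.
have := subset_leq_card sub.
rewrite card_imset; last exact: can_inj phiK.
by rewrite (cardsD1 (i, j) (inversions v)) inij add1n ltnS.
Qed.

Lemma contains321_shorter v : contains v pat321 ->
  exists2 v' : 'S_N, suffix_min v' =1 suffix_min v & len v' < len v.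
Proof.
move/contains321P => /existsP[i /existsP[j /existsP[k /and4P[hij hjk hkj hji]]]].
exists (tperm i j * v)%g; last exact: len_swap_lt.
exact: suffix_min_swap hij hjk (ltn_trans hkj hji) hkj.
Qed.

Lemma contains231_longer v : contains v pat231 ->
  exists2 v' : 'S_N, suffix_min v' =1 suffix_min v & len v < len v'.
Proof.
move/contains231P => /existsP[i /existsP[j /existsP[k /and4P[hij hjk hki hij']]]].
exists (tperm i j * v)%g; first exact: suffix_min_swap hij hjk hki (ltn_trans hki hij').
have := @len_swap_lt (tperm i j * v)%g i j hij.
by rewrite mulgA tperm2 mul1g !permM tpermL tpermR; apply.
Qed.

Lemma len_le_square v : len v <= N * N.
Proof. by rewrite lenE; have := max_card (inversions v); rewrite card_prod card_ord. Qed.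

Lemma exists_avoids321_le v :
  exists u : 'S_N, [/\ suffix_min u =1 suffix_min v, avoids u pat321 & len u <= len v].
Proof.
move: {2}(@len N v) (leqnn (@len N v)) => d; elim: d v => [|d IH] v hv;
  (have [/contains321_shorter[v' sv' lv']|av] := contains321P v; last by exists v).
  lia.
have [u [su au lu]] := IH v' ltac:(lia).
by exists u; split=> // [p|]; [rewrite su sv' | lia].
Qed.

Lemma exists_avoids231_ge v :
  exists u : 'S_N, [/\ suffix_min u =1 suffix_min v, avoids u pat231 & len v <= len u].
Proof.
move: {2}(N * N - @len N v) (leqnn (N * N - @len N v)) => d.
elim: d v => [|d IH] v hv;
  (have [/contains231_longer[v' sv' lv']|av] := contains231P v; last by exists v);
  have := len_le_square v'.
  lia.
move=> hv'; have [u [su au lu]] := IH v' ltac:(lia).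
by exists u; split=> // [p|]; [rewrite su sv' | lia].
Qed.

Lemma first_difference_321 u u' l : suffix_min u =1 suffix_min u' ->
  (forall p : 'I_N, p < l -> u p = u' p) -> u l < u' l -> contains u' pat321.
Proof.
move=> su pre lt_l; set m := (u'^-1)%g (u l).
have um : u' m = u l by rewrite permKV.
have hlm : l < m.
  case: (ltngtP l m) => // h; last by move: lt_l; rewrite -um (ord_inj h) ltnn.
  by have := pre m h; rewrite um => /perm_inj e; move: h; rewrite e ltnn.
have [q hq eq] := suffix_min_attained u (ltn_ord m).
have qnl : u q != u l by apply/negP => /eqP/perm_inj eql; move: hq hlm; rewrite eql; lia.
have h1 : suffix_min u' m <= u' m by apply: suffix_min_le.
have h2 : suffix_min u' m < u l.
  by move: h1 qnl; rewrite -su -eq um -(inj_eq val_inj) /=; lia.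
have [k hk ek] := suffix_min_attained u' (ltn_ord m).
have hmk : m < k.
  case: (ltngtP m k) => // h; first by move: hk h; lia.
  by move: h2; rewrite -ek -(ord_inj h) um ltnn.
apply/contains321P/existsP; exists l; apply/existsP; exists m; apply/existsP; exists k.
by rewrite hlm hmk um ek h2.
Qed.

Lemma last_difference_231 u u' l : suffix_min u =1 suffix_min u' ->
  (forall p : 'I_N, l < p -> u p = u' p) -> u l < u' l -> contains u' pat231.
Proof.
move=> su post lt_l; set m := (u'^-1)%g (u l).
have um : u' m = u l by rewrite permKV.
have hml : m < l.
  case: (ltngtP l m) => // h; last by move: lt_l; rewrite -um (ord_inj h) ltnn.
  by have := post m h; rewrite um => /perm_inj e; move: h; rewrite e ltnn.
have [q hq eq] := suffix_min_attained u (ltn_ord l).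
have hlq : l < q.
  case: (ltngtP l q) => // h; first by move: hq h; lia.
  have [q' hq' eq'] := suffix_min_attained u' (ltn_ord l).
  move: eq'; rewrite -su -eq -(ord_inj h) -um => /val_inj /perm_inj e.
  by move: hq' hml; rewrite e; lia.
have qnl : u q != u l by apply/negP => /eqP/perm_inj e; move: hlq; rewrite e ltnn.
have h1 : suffix_min u l <= u l by apply: suffix_min_le.
apply/contains231P/existsP; exists m; apply/existsP; exists l; apply/existsP; exists q.
rewrite hml hlq um -(post q hlq) lt_l eq andbT /=.
by move: h1 qnl; rewrite -eq -(inj_eq val_inj) /=; lia.
Qed.

Lemma exists_first_difference u u' : u != u' ->
  exists2 l, u l != u' l & forall p : 'I_N, p < l -> u p = u' p.
Proof.
move=> neq; have /existsP[l0 hl0] : [exists l, u l != u' l].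
  by apply: contraNT neq => /existsPn same; apply/eqP/permP => l; apply/eqP/negPn/same.
case: (@arg_minnP _ l0 (fun l => u l != u' l) (@nat_of_ord N) hl0) => l hl lmin.
by exists l => // p hp; apply/eqP; apply: contraTT hp => /lmin; rewrite -leqNgt.
Qed.

Lemma exists_last_difference u u' : u != u' ->
  exists2 l, u l != u' l & forall p : 'I_N, l < p -> u p = u' p.
Proof.
move=> neq; have /existsP[l0 hl0] : [exists l, u l != u' l].
  by apply: contraNT neq => /existsPn same; apply/eqP/permP => l; apply/eqP/negPn/same.
case: (@arg_maxnP _ l0 (fun l => u l != u' l) (@nat_of_ord N) hl0) => l hl lmax.
by exists l => // p hp; apply/eqP; apply: contraTT hp => /lmax; rewrite -leqNgt.
Qed.

Lemma avoids321_unique u u' : suffix_min u =1 suffix_min u' ->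
  avoids u pat321 -> avoids u' pat321 -> u = u'.
Proof.
move=> su au au'; apply/eqP; apply: contraT => /exists_first_difference[l hl pre].
case: (ltngtP (u l) (u' l)) => h; last by rewrite (ord_inj h) eqxx in hl.
  by case: au'; apply: first_difference_321 h.
by case: au; apply: (first_difference_321 (u := u')) h => p *; rewrite ?su ?pre.
Qed.

Lemma avoids231_unique u u' : suffix_min u =1 suffix_min u' ->
  avoids u pat231 -> avoids u' pat231 -> u = u'.
Proof.
move=> su au au'; apply/eqP; apply: contraT => /exists_last_difference[l hl post].
case: (ltngtP (u l) (u' l)) => h; last by rewrite (ord_inj h) eqxx in hl.
  by case: au'; apply: last_difference_231 h.
by case: au; apply: (last_difference_231 (u := u')) h => p *; rewrite ?su ?post.
Qed.

End Patterns.

Theorem mainTheorem1 (N : nat) (hN : 1 <= N) (w : 'S_N) :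
  (exists u : 'S_N,
     [/\ same_image u w, avoids u pat321,
         (forall v : 'S_N, same_image v w -> avoids v pat321 -> v = u) &
         (forall v : 'S_N, same_image v w -> len u <= len v)]) /\
  (exists u : 'S_N,
     [/\ same_image u w, avoids u pat231,
         (forall v : 'S_N, same_image v w -> avoids v pat231 -> v = u) &
         (forall v : 'S_N, same_image v w -> len v <= len u)]).
Proof.
case: N hN w => // n _ w; split.
- have [u [uw au _]] := exists_avoids321_le w.
  exists u; split=> // [|v /same_imageE vw av|v /same_imageE vw]; first exact/same_imageE.
    by apply: avoids321_unique => // p; rewrite vw uw.
  have [u' [u'v au' lu']] := exists_avoids321_le v.
  by rewrite (@avoids321_unique _ u u') // => p; rewrite u'v vw uw.
- have [u [uw au _]] := exists_avoids231_ge w.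
  exists u; split=> // [|v /same_imageE vw av|v /same_imageE vw]; first exact/same_imageE.
    by apply: avoids231_unique => // p; rewrite vw uw.
  have [u' [u'v au' lu']] := exists_avoids231_ge v.
  by rewrite (@avoids231_unique _ u u') // => p; rewrite u'v vw uw.
Qed.
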